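(* Let $L:\mathbb{R}^d\to\mathbb{R}^{\mathcal{Y}}_+$ be a polyhedral loss and $\gamma$ a property. Then $L$ indirectly elicits $\gamma$ if and only if $L$ tightly embeds some discrete loss $\ell$ that indirectly elicits $\gamma$.
   Context: $\mathcal{Y}$ is a finite label set, $\Delta_{\mathcal{Y}}$ the simplex, $\mathbb{R}^{\mathcal{Y}}_+$ the nonnegative orthant. A property $\gamma:\Delta_{\mathcal{Y}}\rightrightarrows\mathcal{R}'$ maps each $p$ to a nonempty subset of $\mathcal{R}'$, with level sets $\gamma_r=\{p:r\in\gamma(p)\}$. A loss $L:\mathcal{R}\to\mathbb{R}^{\mathcal{Y}}_+$ is minimizable if $\inf_r\langle p,L(r)\rangle$ is attained for all $p$; then $\Gamma=\mathrm{prop}[L]$, $\Gamma(p)=\arg\min_r\langle p,L(r)\rangle$. Discrete: finite report set. Polyhedral: $L:\mathbb{R}^d\to\mathbb{R}^{\mathcal{Y}}_+$ with each coordinate a max of finitely many affine functions (such losses are minimizable). A minimizable loss with report set $\mathcal{R}$ indirectly elicits $\gamma$ if for every $r\in\mathcal{R}$ there is $r'\in\mathcal{R}'$ with $\Gamma_r\subseteq\gamma_{r'}$. $\mathcal{S}$ is representative for $\ell$ if $\mathrm{prop}[\ell](p)\cap\mathcal{S}\neq\emptyset$ for all $p$, minimum representative if of smallest cardinality. $L$ embeds $\ell$ if there exist a representative set $\mathcal{S}$ for $\ell$ and injective $\varphi:\mathcal{S}\to\mathbb{R}^d$ with $L(\varphi(r))=\ell(r)$ for $r\in\mathcal{S}$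 and $r\in\mathrm{prop}[\ell](p)\iff\varphi(r)\in\mathrm{prop}[L](p)$ for all $p$, $r\in\mathcal{S}$; tightly if $\mathcal{S}$ can be taken minimum representative. *)

From HB Require Import structures.
From mathcomp Require Import all_boot all_order all_algebra.
From mathcomp Require Import reals.
Set Implicit Arguments. Unset Strict Implicit. Unset Printing Implicit Defensive.
Import Order.TTheory GRing.Theory Num.Theory.
Local Open Scope ring_scope.

Section Defs.
Variables (R : realType) (Y : finType).

Definition simplex (p : Y -> R) : Prop :=
  (forall y, 0 <= p y) /\ \sum_(y : Y) p y = 1.

Definition eloss (p v : Y -> R) : R := \sum_(y : Y) p y * v y.

Definition nonneg_loss (Rep : Type) (L : Rep -> Y -> R) : Prop :=
  forall r y, 0 <= L r y.

Definition prop_of (Rep : Type) (L : Rep -> Y -> R) (p : Y -> R) (r : Rep) : Prop :=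
  forall r', eloss p (L r) <= eloss p (L r').

Definition minimizable (Rep : Type) (L : Rep -> Y -> R) : Prop :=
  forall p, simplex p -> exists r, prop_of L p r.

Definition is_property (R' : Type) (gamma : (Y -> R) -> R' -> Prop) : Prop :=
  forall p, simplex p -> exists r', gamma p r'.

Definition indirectly_elicits (Rep R' : Type) (L : Rep -> Y -> R)
  (gamma : (Y -> R) -> R' -> Prop) : Prop :=
  minimizable L /\
  forall r : Rep, exists r' : R',
    forall p, simplex p -> prop_of L p r -> gamma p r'.

Definition fmax (n : nat) (f : 'I_n.+1 -> R) : R :=
  \big[Num.max/f ord0]_(i < n.+1) f i.

Definition polyhedral (d : nat) (L : 'rV[R]_d -> Y -> R) : Prop :=
  nonneg_loss L /\
  forall y : Y, exists (n : nat) (a : 'I_n.+1 -> 'rV[R]_d) (b : 'I_n.+1 -> R),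
    forall u : 'rV[R]_d,
      L u y = fmax (fun i => \sum_(j < d) a i 0 j * u 0 j + b i).

Definition representative (Rep : finType) (l : Rep -> Y -> R) (S : {set Rep}) : Prop :=
  forall p, simplex p -> exists2 r, r \in S & prop_of l p r.

Definition min_representative (Rep : finType) (l : Rep -> Y -> R) (S : {set Rep}) : Prop :=
  representative l S /\ forall S', representative l S' -> (#|S| <= #|S'|)%N.

Definition embeds_via (d : nat) (L : 'rV[R]_d -> Y -> R) (Rep : finType)
  (l : Rep -> Y -> R) (S : {set Rep}) (phi : Rep -> 'rV[R]_d) : Prop :=
  [/\ representative l S,
      {in S &, injective phi},
      (forall r, r \in S -> L (phi r) = l r) &
      (forall p r, simplex p -> r \in S -> (prop_of l p r <-> prop_of L p (phi r)))].

Definition embeds (d : nat) (L : 'rV[R]_d -> Y -> R) (Rep : finType)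
  (l : Rep -> Y -> R) : Prop :=
  exists S phi, embeds_via L l S phi.

Definition tightly_embeds (d : nat) (L : 'rV[R]_d -> Y -> R) (Rep : finType)
  (l : Rep -> Y -> R) : Prop :=
  exists S phi, min_representative l S /\ embeds_via L l S phi.

End Defs.

From mathcomp Require Import all_boot all_order all_algebra.
From mathcomp Require Import boolp reals.
From mathcomp Require Import ring lra.
Set Implicit Arguments. Unset Strict Implicit. Unset Printing Implicit Defensive.
Import Order.TTheory GRing.Theory Num.Theory.
Local Open Scope ring_scope.

(* Forward direction: record a report u by the set of affine pieces active at u.
   If u minimizes <p, L> and v activates every piece active at u, then all
   losses are affine along the line through v and u slightly beyond u (inactive
   pieces stay below), so minimality of u forces v to be a minimizer as well.
   One point per set of pieces thus gives a finite report set containing a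
   minimizer for every p; L restricted to it is a discrete loss, and any minimum
   representative set of it is embedded injectively, since two reports with the
   same loss vector could replace each other.
   Backward direction: fix u and a distribution q1 at which u is optimal with
   the fewest optimal embedded reports. At the midpoint of q1 and any q where u
   is optimal, the optimal reports are exactly those optimal at both, so by
   minimality the embedded reports optimal at q1 stay optimal at q: the level
   set of u lies in a level set of the discrete loss. *)

Lemma ex_argminn (X : Type) (P : X -> Prop) (m : X -> nat) x :
  P x -> exists2 x0, P x0 & forall x', P x' -> (m x0 <= m x')%N.
Proof.
move=> Px.
have exP : exists n, `[< exists2 x, P x & m x = n >] by exists (m x); apply/asboolP; exists x.
case: (ex_minnP exP) => _ /asboolP [x0 Px0 <-] min_x0.
by exists x0 => // x' Px'; apply/min_x0/asboolP; exists x'.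
Qed.

(* Equivalent to affinity of f, stated in the extrapolation form the argument needs. *)
Definition affine (R : pzRingType) (V : lmodType R) (f : V -> R) : Prop :=
  forall u v t, f (u + t *: (u - v)) = f u + t * (f u - f v).

Lemma affine_row (R : comPzRingType) d (a : 'rV[R]_d) b :
  affine (fun u : 'rV[R]_d => \sum_(j < d) a 0 j * u 0 j + b).
Proof.
move=> u v t; suff -> : \sum_(j < d) a 0 j * (u + t *: (u - v)) 0 j =
    \sum_(j < d) a 0 j * u 0 j + t * (\sum_(j < d) a 0 j * u 0 j - \sum_(j < d) a 0 j * v 0 j).
  by ring.
by rewrite -sumrB mulr_sumr -big_split; apply: eq_bigr => j _; rewrite !mxE /=; ring.
Qed.

Section SmallMultiplier.
Variables (R : realFieldType) (I : finType) (P : pred I) (c0 c : I -> R).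

Lemma ex_small_pos : (forall i, P i -> 0 < c0 i) ->
  exists2 t, 0 < t & forall i, P i -> t * c i <= c0 i.
Proof.
move=> c0_gt0; pose t := \big[Num.min/1]_(i | P i) (c0 i / (`|c i| + 1)).
have norm_gt0 i : 0 < `|c i| + 1 by rewrite ltr_wpDl.
exists t.
  by apply/bigmin_gtP; split=> // i Pi; rewrite divr_gt0 ?c0_gt0.
move=> i Pi; have : t <= c0 i / (`|c i| + 1) by apply: bigmin_le_cond.
rewrite ler_pdivlMr // => t_le.
have t_ge0 : 0 <= t by apply/bigmin_geP; split=> // j Pj; rewrite divr_ge0 ?ltW ?c0_gt0.
have : t * c i <= t * `|c i| by rewrite ler_wpM2l // ler_norm.
nra.
Qed.

End SmallMultiplier.

Section Losses.
Variables (R : realType) (Y : finType).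

Lemma ex_simplex : (0 < #|Y|)%N -> exists p : Y -> R, simplex p.
Proof.
case/card_gt0P => y0 _; exists (fun y => (y == y0)%:R); split=> [y|].
  by rewrite ler0n.
by rewrite (bigD1 y0) //= eqxx big1 ?addr0 // => y /negPf ->.
Qed.

Definition midpoint (q1 q2 : Y -> R) : Y -> R := fun y => (q1 y + q2 y) / 2.

Lemma simplex_midpoint q1 q2 : simplex q1 -> simplex q2 -> simplex (midpoint q1 q2).
Proof.
move=> [q1_ge0 q1_sum] [q2_ge0 q2_sum]; split=> [y|].
  by rewrite divr_ge0 ?addr_ge0.
by rewrite -mulr_suml big_split /= q1_sum q2_sum; lra.
Qed.

Lemma eloss_midpoint q1 q2 v :
  eloss (midpoint q1 q2) v = (eloss q1 v + eloss q2 v) / 2.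
Proof.
rewrite /eloss -big_split mulr_suml; apply: eq_bigr => y _.
by rewrite /midpoint mulrAC mulrDl.
Qed.

Lemma eloss_extrapolate p (a b c : Y -> R) t :
  (forall y, c y = a y + t * (a y - b y)) ->
  eloss p c = eloss p a + t * (eloss p a - eloss p b).
Proof.
move=> cE; rewrite /eloss -sumrB mulr_sumr -big_split.
by apply: eq_bigr => y _; rewrite cE /=; ring.
Qed.

Lemma prop_of_midpoint (X : Type) (L : X -> Y -> R) q1 q2 u v :
  prop_of L q1 u -> prop_of L q2 u ->
  prop_of L (midpoint q1 q2) v <-> prop_of L q1 v /\ prop_of L q2 v.
Proof.
move=> u_opt1 u_opt2; split=> [v_opt | [v_opt1 v_opt2] w]; last first.
  by rewrite !eloss_midpoint; have := v_opt1 w; have := v_opt2 w; lra.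
move: (v_opt u) (u_opt1 v) (u_opt2 v); rewrite !eloss_midpoint => vu uv1 uv2.
by split=> w; [have := u_opt1 w | have := u_opt2 w]; lra.
Qed.

Section Representatives.
Variables (Rep : finType) (l : Rep -> Y -> R).

Lemma representative_minimizable S : representative l S -> minimizable l.
Proof. by move=> Srep p /Srep [r _ r_opt]; exists r. Qed.

Lemma ex_min_representative S : representative l S -> exists S', min_representative l S'.
Proof.
move=> Srep; have [S' S'rep S'min] := ex_argminn (P := representative l) (fun S => #|S|) Srep.
by exists S'; split.
Qed.

Lemma min_representative_inj S : min_representative l S -> {in S &, injective l}.
Proof.
move=> [Srep Smin] r1 r2 r1S r2S l12; apply/eqP/negP => /negP r12.
suff /Smin : representative l (S :\ r2) by rewrite (cardsD1 r2 S) r2S ltnn.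
move=> p /Srep [r rS r_opt]; have [r_eq | r_neq] := eqVneq r r2.
  by exists r1; rewrite ?inE ?r12 // /prop_of l12 -r_eq.
by exists r; rewrite ?inE ?r_neq.
Qed.

End Representatives.

Section Restriction.
Variables (X : Type) (L : X -> Y -> R) (Rep : finType) (pt : Rep -> X).
Hypothesis pt_minimizers : forall p, simplex p -> exists r, prop_of L p (pt r).

Lemma prop_of_comp p r : simplex p -> prop_of (L \o pt) p r <-> prop_of L p (pt r).
Proof.
move=> sp; split=> [r_opt u | pt_opt r']; last exact: pt_opt.
by have [r0 r0_opt] := pt_minimizers sp; apply: le_trans (r_opt r0) (r0_opt u).
Qed.

Lemma representative_comp : representative (L \o pt) setT.
Proof.
by move=> p sp; have [r r_opt] := pt_minimizers sp; exists r; rewrite ?prop_of_comp.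
Qed.

Lemma indirectly_elicits_comp (R' : Type) (gamma : (Y -> R) -> R' -> Prop) :
  indirectly_elicits L gamma -> indirectly_elicits (L \o pt) gamma.
Proof.
case=> _ L_elicits; split; first exact: representative_minimizable representative_comp.
move=> r; have [r' r'P] := L_elicits (pt r).
by exists r' => p sp /(prop_of_comp r sp); exact: r'P.
Qed.

End Restriction.

Lemma tightly_embeds_comp d (L : 'rV[R]_d -> Y -> R) (Rep : finType) (pt : Rep -> 'rV_d) :
  (forall p, simplex p -> exists r, prop_of L p (pt r)) -> tightly_embeds L (L \o pt).
Proof.
move=> pt_min; have [S [Srep Smin]] := ex_min_representative (representative_comp pt_min).
exists S, pt; split=> //; split=> // [r1 r2 r1S r2S pt12 | p r sp _].
  by apply: (min_representative_inj (conj Srep Smin)) => //=; rewrite pt12.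
exact: prop_of_comp.
Qed.

Section ActivePieces.
Variables (V : lmodType R) (L : V -> Y -> R).
Variables (K : finType) (tg : K -> Y) (aff : K -> V -> R).
Hypothesis aff_affine : forall k, affine (aff k).
Hypothesis piece_le : forall u k, aff k u <= L u (tg k).
Hypothesis piece_max : forall u y, exists2 k, tg k = y & aff k u = L u y.

Definition active u := [set k | aff k u == L u (tg k)].

Lemma loss_extrapolate u v : active u \subset active v ->
  exists2 t, 0 < t & forall y, L (u + t *: (u - v)) y = L u y + t * (L u y - L v y).
Proof.
move=> /subsetP uv.
have [t t_gt0 t_small] : exists2 t, 0 < t & forall k, k \notin active u ->
    t * (L v (tg k) - aff k v) <= L u (tg k) - aff k u.
  apply: ex_small_pos => k; rewrite inE subr_gt0 lt_def eq_sym => ->.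
  exact: piece_le.
exists t => // y; set w := u + t *: (u - v).
have aff_w k : aff k w = aff k u + t * (aff k u - aff k v) by exact: aff_affine.
apply/eqP; rewrite eq_le; apply/andP; split.
- have [k <- <-] := piece_max w y; rewrite aff_w.
  have [ku | nku] := boolP (k \in active u).
    by have := uv k ku; rewrite !inE in ku * => /eqP <-; rewrite (eqP ku).
  have gap_ge0 : 0 <= L u (tg k) - aff k u by rewrite subr_ge0 piece_le.
  have := t_small k nku; have := mulr_ge0 (ltW t_gt0) gap_ge0; nra.
- have [k <- k_max] := piece_max u y.
  have := uv k; rewrite !inE k_max eqxx => /(_ isT) /eqP <-.
  by rewrite -k_max -aff_w piece_le.
Qed.

Lemma prop_of_active p u v : active u \subset active v -> prop_of L p u -> prop_of L p v.
Proof.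
move=> uv u_opt; have [t t_gt0 Lw] := loss_extrapolate uv.
have := u_opt (u + t *: (u - v)); rewrite (eloss_extrapolate p Lw) => u_le_w.
have : 0 <= t * (eloss p (L u) - eloss p (L v)) by lra.
by rewrite pmulr_rge0 // subr_ge0 => v_le_u w; apply: le_trans v_le_u (u_opt w).
Qed.

Lemma ex_active_minimizers :
  exists pt : {set K} -> V, forall p u, prop_of L p u -> prop_of L p (pt (active u)).
Proof.
have /choice [pt ptP] : forall A : {set K},
    exists v, (exists u, A \subset active u) -> A \subset active v.
  move=> A; have [[u Au] | nA] := pselect (exists u, A \subset active u).
    by exists u.
  by exists 0 => /nA.
by exists pt => p u u_opt; apply: prop_of_active u_opt; apply: ptP; exists u.
Qed.

End ActivePieces.

Lemma fmax_ge n (f : 'I_n.+1 -> R) i : f i <= fmax f.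
Proof. exact: le_bigmax. Qed.

Lemma fmax_attained n (f : 'I_n.+1 -> R) : exists i, fmax f = f i.
Proof.
apply: (big_ind (fun x => exists i, x = f i)); first by exists ord0.
  by move=> _ _ [i ->] [j ->]; case: (leP (f i) (f j)); [exists j | exists i].
by move=> i _; exists i.
Qed.

Lemma polyhedral_pieces d (L : 'rV[R]_d -> Y -> R) : polyhedral L ->
  exists (K : finType) (tg : K -> Y) (aff : K -> 'rV[R]_d -> R),
  [/\ forall k, affine (aff k), forall u k, aff k u <= L u (tg k) &
      forall u y, exists2 k, tg k = y & aff k u = L u y].
Proof.
case=> _ L_max.
have /choice [F LF] : forall y, exists x : {n : nat & ('I_n.+1 -> 'rV[R]_d) * ('I_n.+1 -> R)},
    forall u, L u y = fmax (fun i => \sum_(j < d) (tagged x).1 i 0 j * u 0 j + (tagged x).2 i).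
  by move=> y; have [n [a [b Lab]]] := L_max y; exists (existT _ n (a, b)).
pose piece y (i : 'I_(tag (F y)).+1) (u : 'rV[R]_d) :=
  \sum_(j < d) (tagged (F y)).1 i 0 j * u 0 j + (tagged (F y)).2 i.
exists {y : Y & 'I_(tag (F y)).+1}, tag.
exists (fun k : {y : Y & 'I_(tag (F y)).+1} => piece (tag k) (tagged k)); split.
- by move=> [y i]; apply: affine_row.
- by move=> u [y i] /=; rewrite LF; apply: (fmax_ge (fun i => piece y i u)).
- move=> u y; have [i fi] := fmax_attained (fun i => piece y i u).
  by exists (existT _ y i); rewrite //= LF fi.
Qed.

Lemma polyhedral_minimizers d (L : 'rV[R]_d -> Y -> R) : polyhedral L -> minimizable L ->
  exists (Rep : finType) (pt : Rep -> 'rV[R]_d),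
    forall p, simplex p -> exists r, prop_of L p (pt r).
Proof.
move=> /polyhedral_pieces [K [tg [aff [aff_affine piece_le piece_max]]]] L_min.
have [pt ptP] := ex_active_minimizers aff_affine piece_le piece_max.
by exists {set K}, pt => p /L_min [u u_opt]; exists (active L tg aff u); apply: ptP.
Qed.

Section Embedding.
Variables (d : nat) (L : 'rV[R]_d -> Y -> R).
Variables (Rep : finType) (l : Rep -> Y -> R) (S : {set Rep}) (phi : Rep -> 'rV[R]_d).
Hypothesis emb : embeds_via L l S phi.

Lemma embeds_via_minimizable : minimizable L.
Proof.
case: emb => Srep _ _ phi_opt p sp; have [r rS r_opt] := Srep p sp.
by exists (phi r); apply/phi_opt.
Qed.

Lemma embeds_via_level_set q0 u : simplex q0 -> prop_of L q0 u ->
  exists r, forall q, simplex q -> prop_of L q u -> prop_of l q r.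
Proof.
case: emb => Srep _ _ phi_opt sq0 u_opt0.
pose opt q := [set r in S | `[< prop_of l q r >]].
have opt_mid q1 q2 : simplex q1 -> simplex q2 -> prop_of L q1 u -> prop_of L q2 u ->
    opt (midpoint q1 q2) = opt q1 :&: opt q2.
  move=> sq1 sq2 u_opt1 u_opt2; apply/setP => r; rewrite !inE.
  have [rS | //] := boolP (r \in S); rewrite /=.
  have phi_opt_mid := phi_opt _ _ (simplex_midpoint sq1 sq2) rS.
  apply/asboolP/andP => [/phi_opt_mid/(prop_of_midpoint _ u_opt1 u_opt2) [r_opt1 r_opt2] |
                         [/asboolP r_opt1 /asboolP r_opt2]].
    by split; apply/asboolP/(phi_opt _ _ _ rS).
  by apply/phi_opt_mid/(prop_of_midpoint _ u_opt1 u_opt2); split; apply/(phi_opt _ _ _ rS).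
have [q1 [sq1 u_opt1] q1_min] := ex_argminn (P := fun q => simplex q /\ prop_of L q u)
  (fun q => #|opt q|) (conj sq0 u_opt0).
have [r rS r_opt1] := Srep q1 sq1.
exists r => q sq u_opt.
have opt_sub : opt q1 \subset opt q.
  have u_opt_mid := (prop_of_midpoint u u_opt1 u_opt).2 (conj u_opt1 u_opt).
  have := q1_min _ (conj (simplex_midpoint sq1 sq) u_opt_mid).
  rewrite opt_mid // => card_le; apply/setIidPl/eqP.
  by rewrite eqEcard subsetIl card_le.
have : r \in opt q by apply: (subsetP opt_sub); rewrite inE rS; apply/asboolP.
by rewrite inE => /andP [_ /asboolP].
Qed.

Lemma embeds_via_indirectly_elicits (R' : Type) (gamma : (Y -> R) -> R' -> Prop) :
  (0 < #|Y|)%N -> is_property gamma ->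
  indirectly_elicits l gamma -> indirectly_elicits L gamma.
Proof.
move=> Y_gt0 gamma_prop [_ l_elicits]; split; first exact: embeds_via_minimizable.
move=> u; have [[q0 sq0 u_opt0] | never_opt] :=
  pselect (exists2 q, simplex q & prop_of L q u).
  have [r r_level] := embeds_via_level_set sq0 u_opt0.
  have [r' r'P] := l_elicits r.
  by exists r' => p sp /(r_level p sp); apply: r'P.
have [p0 sp0] := ex_simplex Y_gt0; have [r' _] := gamma_prop p0 sp0.
by exists r' => p sp u_opt; case: never_opt; exists p.
Qed.

End Embedding.

End Losses.

Theorem lemma4 (R : realType) (Y : finType) (d : nat) (R' : Type)
  (L : 'rV[R]_d -> Y -> R) (gamma : (Y -> R) -> R' -> Prop) :
  (0 < #|Y|)%N ->
  polyhedral L ->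
  is_property gamma ->
  indirectly_elicits L gamma <->
  exists (Rep : finType) (l : Rep -> Y -> R),
    [/\ nonneg_loss l, tightly_embeds L l & indirectly_elicits l gamma].
Proof.
move=> Y_gt0 L_poly gamma_prop; split; last first.
  case=> Rep [l [_ [S [phi [_ emb]]] l_elicits]].
  exact: (embeds_via_indirectly_elicits emb)...
move=> L_elicits.
have [Rep [pt pt_min]] := polyhedral_minimizers L_poly L_elicits.1.
exists Rep, (L \o pt); split.
- by move=> r y; apply: L_poly.1.
- exact: tightly_embeds_comp.
- exact: indirectly_elicits_comp.
Qed.
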